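(* Let $\langle D,E,e,\varepsilon\rangle$ be a restricted Priestley duality between a variety $\mathcal A$ and a category $\mathcal X$. (1) A morphism $u\colon\mathbf A\to\mathbf B$ in $\mathcal A$ is surjective if and only if $D(u)\colon D(\mathbf B)\to D(\mathbf A)$ is a $\mathcal P$-embedding, and is an embedding if and only if $D(u)$ is $\mathcal P$-surjective. (2) A morphism $\phi\colon\mathbb X\to\mathbb Y$ in $\mathcal X$ is $\mathcal P$-surjective if and only if $E(\phi)\colon E(\mathbb Y)\to E(\mathbb X)$ is an embedding, and is a $\mathcal P$-embedding if and only if $E(\phi)$ is surjective.
   Context: $\mathcal D$: bounded distributive lattices; $\mathcal P$: Priestley spaces with continuous order-preserving maps. Priestley duality: $H(\mathbf L)=\mathcal D(\mathbf L,\mathbf 2)$, $K(\mathbb X)=\mathcal P(\mathbb X,\mathbbm 2)$, morphisms by precomposition, unit and counit by evaluation. A restricted Priestley duality $\langle D,E,e,\varepsilon\rangle$: $\mathcal A$ a variety with a term reduct in $\mathcal D$ and forgetful functor ${}^\flat\colon\mathcal A\to\mathcal D$; $\mathcal X$ a category with a functor ${}^\flat\colon\mathcal X\to\mathcal P$; $D\colon\mathcal A\to\mathcal X$, $E\colon\mathcal X\to\mathcal A$ a dual equivalence with unit $e$ and counit $\varepsilon$, such that ${}^\flat\circ D=H\circ{}^\flat$, ${}^\flat\circ E=K\circ{}^\flat$, $e_{\mathbf A}^\flat=e_{\mathbf A^\flat}$, $\varepsilon_{\mathbb X}^\flat=\varepsilon_{\mathbb X^\flat}$. A morphism $\phi$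 of $\mathcal X$ is $\mathcal P$-surjective if $\phi^\flat$ is surjective, and a $\mathcal P$-embedding if $\phi^\flat$ is an embedding of Priestley spaces (order-embedding). *)

From Stdlib Require Import List JMeq FunctionalExtensionality Bool.
From Stdlib Require Fin.



Definition surj {T U : Type} (f : T -> U) : Prop := forall y, exists x, f x = y.
Definition inj {T U : Type} (f : T -> U) : Prop := forall x y, f x = f y -> x = y.

Record BDLraw : Type := {
  lcar :> Type;
  lmeet : lcar -> lcar -> lcar;
  ljoin : lcar -> lcar -> lcar;
  lbot : lcar;
  ltop : lcar }.
Arguments lmeet : clear implicits.
Arguments ljoin : clear implicits.
Arguments lbot : clear implicits.
Arguments ltop : clear implicits.

Definition bdl_axioms (L : BDLraw) : Prop :=
  (forall x y z, lmeet L x (lmeet L y z) = lmeet L (lmeet L x y) z) /\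
  (forall x y z, ljoin L x (ljoin L y z) = ljoin L (ljoin L x y) z) /\
  (forall x y, lmeet L x y = lmeet L y x) /\
  (forall x y, ljoin L x y = ljoin L y x) /\
  (forall x y, lmeet L x (ljoin L x y) = x) /\
  (forall x y, ljoin L x (lmeet L x y) = x) /\
  (forall x y z, lmeet L x (ljoin L y z) = ljoin L (lmeet L x y) (lmeet L x z)) /\
  (forall x, ljoin L x (lbot L) = x) /\
  (forall x, lmeet L x (ltop L) = x).

Definition BDL : Type := { L : BDLraw | bdl_axioms L }.

Definition is_lhom (L M : BDLraw) (f : lcar L -> lcar M) : Prop :=
  (forall x y, f (lmeet L x y) = lmeet M (f x) (f y)) /\
  (forall x y, f (ljoin L x y) = ljoin M (f x) (f y)) /\
  f (lbot L) = lbot M /\ f (ltop L) = ltop M.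

Definition LHom (L M : BDLraw) : Type := { f : lcar L -> lcar M | is_lhom L M f }.

Definition bool_bdl : BDLraw :=
  {| lcar := bool; lmeet := andb; ljoin := orb; lbot := false; ltop := true |}.

Record PSpace : Type := {
  pcar :> Type;
  popen : (pcar -> Prop) -> Prop;
  ple : pcar -> pcar -> Prop }.
Arguments popen : clear implicits.
Arguments ple : clear implicits.

(* topology axioms; the third one (local criterion for openness) is
   equivalent to closure under arbitrary unions *)
Definition is_topology (X : PSpace) : Prop :=
  popen X (fun _ => True) /\
  (forall U V, popen X U -> popen X V -> popen X (fun x => U x /\ V x)) /\
  (forall U, (forall x, U x -> exists V, popen X V /\ V x /\ (forall y, V y -> U y)) ->
             popen X U).

Definition pclosed (X : PSpace) (U : X -> Prop) : Prop := popen X (fun x => ~ U x).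
Definition pclopen (X : PSpace) (U : X -> Prop) : Prop := popen X U /\ pclosed X U.
Definition upset (X : PSpace) (U : X -> Prop) : Prop :=
  forall x y, ple X x y -> U x -> U y.

Definition compact_space (X : PSpace) : Prop :=
  forall C : (X -> Prop) -> Prop,
    (forall U, C U -> popen X U) ->
    (forall x, exists U, C U /\ U x) ->
    exists l : list (X -> Prop),
      (forall U, List.In U l -> C U) /\ (forall x, exists U, List.In U l /\ U x).

Definition partial_order (X : PSpace) : Prop :=
  (forall x, ple X x x) /\
  (forall x y, ple X x y -> ple X y x -> x = y) /\
  (forall x y z, ple X x y -> ple X y z -> ple X x z).

Definition priestley_separation (X : PSpace) : Prop :=
  forall x y, ~ ple X x y ->
    exists U, pclopen X U /\ upset X U /\ U x /\ ~ U y.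

Definition is_priestley (X : PSpace) : Prop :=
  is_topology X /\ compact_space X /\ partial_order X /\ priestley_separation X.

Definition PObj : Type := { X : PSpace | is_priestley X }.

Definition pcontinuous (X Y : PSpace) (f : X -> Y) : Prop :=
  forall V, popen Y V -> popen X (fun x => V (f x)).
Definition pmonotone (X Y : PSpace) (f : X -> Y) : Prop :=
  forall x y, ple X x y -> ple Y (f x) (f y).
Definition is_phom (X Y : PSpace) (f : X -> Y) : Prop :=
  pcontinuous X Y f /\ pmonotone X Y f.

Definition PHom (X Y : PSpace) : Type := { f : pcar X -> pcar Y | is_phom X Y f }.

Definition two_space : PSpace :=
  {| pcar := bool; popen := fun _ => True; ple := fun b c => implb b c = true |}.

Definition order_embedding {X Y : PSpace} (f : X -> Y) : Prop :=
  forall x y, ple X x y <-> ple Y (f x) (f y).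

(* H = D(-, 2) and K = P(-, 2)                                          *)
Definition Hcar (L : BDLraw) : Type := LHom L bool_bdl.

(* subspace topology of the product topology on 2^L *)
Definition H_open (L : BDLraw) (U : Hcar L -> Prop) : Prop :=
  forall h, U h -> exists l : list (lcar L * bool),
    (forall p, List.In p l -> proj1_sig h (fst p) = snd p) /\
    (forall k : Hcar L, (forall p, List.In p l -> proj1_sig k (fst p) = snd p) -> U k).

Definition H_raw (L : BDLraw) : PSpace :=
  {| pcar := Hcar L; popen := @H_open L;
     ple := fun h k => forall a, implb (proj1_sig h a) (proj1_sig k a) = true |}.

Lemma lhom_comp (L M N : BDLraw) (f : lcar L -> lcar M) (g : lcar M -> lcar N) :
  is_lhom L M f -> is_lhom M N g -> is_lhom L N (fun x => g (f x)).
Proof.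
  intros [f1 [f2 [f3 f4]]] [g1 [g2 [g3 g4]]]; repeat split.
  - intros; rewrite f1, g1; reflexivity.
  - intros; rewrite f2, g2; reflexivity.
  - rewrite f3, g3; reflexivity.
  - rewrite f4, g4; reflexivity.
Qed.

Arguments lhom_comp {L M N f g}.
Definition H_fun (L M : BDLraw) (u : LHom L M) : Hcar M -> Hcar L :=
  fun h => exist _ (fun x => proj1_sig h (proj1_sig u x))
                 (lhom_comp (proj2_sig u) (proj2_sig h)).

Definition Kcar (X : PSpace) : Type := PHom X two_space.

Lemma phom_comp (X Y Z : PSpace) (f : X -> Y) (g : Y -> Z) :
  is_phom X Y f -> is_phom Y Z g -> is_phom X Z (fun x => g (f x)).
Proof.
  intros [fc fm] [gc gm]; split.
  - intros V HV; exact (fc _ (gc V HV)).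
  - intros x y Hxy; exact (gm _ _ (fm _ _ Hxy)).
Qed.

Arguments phom_comp {X Y Z f g}.
Definition K_fun (X Y : PSpace) (phi : PHom X Y) : Kcar Y -> Kcar X :=
  fun f => exist _ (fun x => proj1_sig f (proj1_sig phi x))
                 (phom_comp (proj2_sig phi) (proj2_sig f)).

Section Kops.
Variable X : PSpace.
Hypothesis HX : is_topology X.

Lemma fiber_open (f : Kcar X) (b : bool) : popen X (fun x => proj1_sig f x = b).
Proof.
  destruct f as [f [fc fm]]; simpl.
  exact (fc (fun c => c = b) I).
Qed.

Lemma pointwise_phom (op : bool -> bool -> bool)
  (mono : forall a b c d, implb a c = true -> implb b d = true ->
                          implb (op a b) (op c d) = true)
  (f g : Kcar X) : is_phom X two_space (fun x => op (proj1_sig f x) (proj1_sig g x)).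
Proof.
  destruct HX as [T1 [T2 T3]]; split.
  - intros V _. apply T3. intros x Hx.
    exists (fun y => proj1_sig f y = proj1_sig f x /\ proj1_sig g y = proj1_sig g x).
    split; [apply T2; apply fiber_open|]. split; [auto|].
    intros y [E1 E2]; cbv beta in *; rewrite E1, E2; exact Hx.
  - intros x y Hxy; simpl. apply mono.
    + exact (proj2 (proj2_sig f) _ _ Hxy).
    + exact (proj2 (proj2_sig g) _ _ Hxy).
Qed.

Lemma const_phom (b : bool) : is_phom X two_space (fun _ => b).
Proof.
  destruct HX as [T1 [T2 T3]]; split.
  - intros V _. apply T3. intros x Hx. exists (fun _ => True); auto.
  - intros x y _; simpl; destruct b; reflexivity.
Qed.

Lemma andb_mono a b c d : implb a c = true -> implb b d = true ->
  implb (a && b) (c && d) = true.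
Proof. destruct a, b, c, d; simpl; auto. Qed.
Lemma orb_mono a b c d : implb a c = true -> implb b d = true ->
  implb (a || b) (c || d) = true.
Proof. destruct a, b, c, d; simpl; auto. Qed.

Definition K_meet (f g : Kcar X) : Kcar X :=
  exist _ _ (pointwise_phom andb andb_mono f g).
Definition K_join (f g : Kcar X) : Kcar X :=
  exist _ _ (pointwise_phom orb orb_mono f g).
Definition K_bot : Kcar X := exist _ _ (const_phom false).
Definition K_top : Kcar X := exist _ _ (const_phom true).
End Kops.
Arguments K_meet {X} HX. Arguments K_join {X} HX. Arguments K_bot {X} HX. Arguments K_top {X} HX.

Definition K_raw (Xp : PObj) : BDLraw :=
  let HX := proj1 (proj2_sig Xp) in
  {| lcar := Kcar (proj1_sig Xp);
     lmeet := K_meet HX; ljoin := K_join HX;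
     lbot := K_bot HX; ltop := K_top HX |}.

Lemma eval_e_phom (L : BDLraw) (a : lcar L) :
  is_phom (H_raw L) two_space (fun h : Hcar L => proj1_sig h a).
Proof.
  split.
  - intros V _ h Hh. exists ((a, proj1_sig h a) :: nil). split.
    + intros p [<-|[]]; reflexivity.
    + intros k Hk. pose proof (Hk (a, proj1_sig h a) (or_introl eq_refl)) as E.
      exact (eq_rect_r V Hh E).
  - intros h k Hhk; exact (Hhk a).
Qed.

Definition eval_e (L : BDLraw) : lcar L -> Kcar (H_raw L) :=
  fun a => exist _ _ (eval_e_phom L a).

Lemma eval_eps_lhom (Xp : PObj) (x : pcar (proj1_sig Xp)) :
  is_lhom (K_raw Xp) bool_bdl (fun f : Kcar (proj1_sig Xp) => proj1_sig f x).
Proof. repeat split. Qed.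

Definition eval_eps (Xp : PObj) : pcar (proj1_sig Xp) -> Hcar (K_raw Xp) :=
  fun x => exist _ _ (eval_eps_lhom Xp x).

Record signature : Type := { sop : Type; sar : sop -> nat }.

Record algebra (S : signature) : Type := {
  acar :> Type;
  aop : forall o : sop S, (Fin.t (sar S o) -> acar) -> acar }.
Arguments acar {S}.
Arguments aop {S} a o _.

Inductive term (S : signature) (V : Type) : Type :=
| tvar : V -> term S V
| tapp : forall o : sop S, (Fin.t (sar S o) -> term S V) -> term S V.
Arguments tvar {S V}.
Arguments tapp {S V}.

Fixpoint teval (S : signature) (V : Type) (A : algebra S) (v : V -> acar A)
  (t : term S V) : acar A :=
  match t with
  | tvar x => v x
  | tapp o ts => aop A o (fun i => teval S V A v (ts i))
  end.
Arguments teval {S V} A v t.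

Definition models (S : signature) (Eq : term S nat -> term S nat -> Prop)
  (A : algebra S) : Prop :=
  forall s t, Eq s t -> forall v : nat -> acar A, teval A v s = teval A v t.

Arguments models {S}.

(* the term reduct given by binary terms (variables false = x, true = y)
   and nullary terms (no variables) *)
Definition reduct (S : signature) (tm tj : term S bool) (tb tt : term S Empty_set)
  (A : algebra S) : BDLraw :=
  {| lcar := acar A;
     lmeet := fun x y => teval A (fun b : bool => if b then y else x) tm;
     ljoin := fun x y => teval A (fun b : bool => if b then y else x) tj;
     lbot := teval A (fun e : Empty_set => match e with end) tb;
     ltop := teval A (fun e : Empty_set => match e with end) tt |}.

Arguments reduct {S}.

Record variety : Type := {
  vsig : signature;
  veq : term vsig nat -> term vsig nat -> Prop;
  vmeet : term vsig bool;
  vjoin : term vsig bool;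
  vbot : term vsig Empty_set;
  vtop : term vsig Empty_set;
  vreduct : forall A : algebra vsig, models veq A ->
                                     bdl_axioms (reduct vmeet vjoin vbot vtop A) }.

Definition AObj (V : variety) : Type := { A : algebra (vsig V) | models (veq V) A }.

Definition is_ahom (S : signature) (A B : algebra S) (f : acar A -> acar B) : Prop :=
  forall o args, f (aop A o args) = aop B o (fun i => f (args i)).

Arguments is_ahom {S}.

Definition AHom (V : variety) (A B : AObj V) : Type :=
  { f : acar (proj1_sig A) -> acar (proj1_sig B) | is_ahom (proj1_sig A) (proj1_sig B) f }.

Arguments AHom {V}.

Lemma hom_teval (S : signature) (W : Type) (A B : algebra S) (f : acar A -> acar B)
  (hf : is_ahom A B f) (v : W -> acar A) (t : term S W) :
  f (teval A v t) = teval B (fun x => f (v x)) t.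
Proof.
  induction t as [x|o ts IH]; simpl; [reflexivity|].
  rewrite hf. f_equal. apply functional_extensionality. intro i. apply IH.
Qed.

Definition flatA_raw (V : variety) (A : AObj V) : BDLraw :=
  reduct (vmeet V) (vjoin V) (vbot V) (vtop V) (proj1_sig A).

Arguments flatA_raw {V}.

Definition flatA (V : variety) (A : AObj V) : BDL :=
  exist _ (flatA_raw A) (vreduct V (proj1_sig A) (proj2_sig A)).

Arguments flatA {V}.
Arguments hom_teval {S W A B f} hf v t.

Lemma flatA_hom_lhom (V : variety) (A B : AObj V) (u : AHom A B) :
  is_lhom (flatA_raw A) (flatA_raw B) (proj1_sig u).
Proof.
  destruct u as [u hu]; unfold flatA_raw, reduct, is_lhom; cbn [lmeet ljoin lbot ltop proj1_sig].
  repeat split; intros; rewrite (hom_teval hu); f_equal;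
    apply functional_extensionality; (intros [|]; reflexivity) || intros [].
Qed.

Arguments flatA_hom_lhom {V A B}.

Definition flatA_hom (V : variety) (A B : AObj V) (u : AHom A B)
  : LHom (flatA_raw A) (flatA_raw B) := exist _ (proj1_sig u) (flatA_hom_lhom u).

Arguments flatA_hom {V A B}.

Definition ahom_id (V : variety) (A : AObj V) : AHom A A :=
  exist (is_ahom (proj1_sig A) (proj1_sig A)) (fun x => x) (fun o args => eq_refl).

Arguments ahom_id {V}.

Record Cat : Type := {
  cob : Type;
  chom : cob -> cob -> Type;
  cid : forall a, chom a a;
  ccomp : forall a b c, chom b c -> chom a b -> chom a c;
  ccomp_id_l : forall a b (f : chom a b), ccomp a b b (cid b) f = f;
  ccomp_id_r : forall a b (f : chom a b), ccomp a a b f (cid a) = f;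
  ccomp_assoc : forall a b c d (f : chom a b) (g : chom b c) (h : chom c d),
      ccomp a c d h (ccomp a b c g f) = ccomp a b d (ccomp b c d h g) f }.
Arguments cid {_} _.
Arguments ccomp {_ _ _ _} _ _.

Record flat_functor (X : Cat) : Type := {
  fob : cob X -> PObj;
  fhom : forall a b, chom X a b -> PHom (proj1_sig (fob a)) (proj1_sig (fob b));
  fhom_id : forall a x, proj1_sig (fhom a a (cid a)) x = x;
  fhom_comp : forall a b c (f : chom X a b) (g : chom X b c) x,
      proj1_sig (fhom a c (ccomp g f)) x = proj1_sig (fhom b c g) (proj1_sig (fhom a b f) x) }.
Arguments fob {X}.
Arguments fhom {X} _ {a b} _.

Record rpd (V : variety) (X : Cat) (F : flat_functor X) : Type := {
  Dob : AObj V -> cob X;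
  Dhom : forall A B : AObj V, AHom A B -> chom X (Dob B) (Dob A);
  Dhom_id : forall A, Dhom A A (ahom_id A) = cid (Dob A);
  Dhom_comp : forall (A B C : AObj V) (u : AHom A B) (v : AHom B C) (w : AHom A C),
      (forall x, proj1_sig w x = proj1_sig v (proj1_sig u x)) ->
      Dhom A C w = ccomp (Dhom A B u) (Dhom B C v);
  Eob : cob X -> AObj V;
  Ehom : forall x y : cob X, chom X x y -> AHom (Eob y) (Eob x);
  Ehom_id : forall x a, proj1_sig (Ehom x x (cid x)) a = a;
  Ehom_comp : forall x y z (f : chom X x y) (g : chom X y z) a,
      proj1_sig (Ehom x z (ccomp g f)) a
      = proj1_sig (Ehom x y f) (proj1_sig (Ehom y z g) a);
  eu : forall A : AObj V, AHom A (Eob (Dob A));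
  eu_iso : forall A, exists g : AHom (Eob (Dob A)) A,
      (forall a, proj1_sig g (proj1_sig (eu A) a) = a) /\
      (forall b, proj1_sig (eu A) (proj1_sig g b) = b);
  eu_nat : forall A B (u : AHom A B) a,
      proj1_sig (Ehom (Dob B) (Dob A) (Dhom A B u)) (proj1_sig (eu A) a)
      = proj1_sig (eu B) (proj1_sig u a);
  ec : forall x : cob X, chom X x (Dob (Eob x));
  ec_iso : forall x, exists g : chom X (Dob (Eob x)) x,
      ccomp g (ec x) = cid x /\ ccomp (ec x) g = cid (Dob (Eob x));
  ec_nat : forall x y (phi : chom X x y),
      ccomp (Dhom (Eob y) (Eob x) (Ehom x y phi)) (ec x) = ccomp (ec y) phi;
  DH_ob : forall A, proj1_sig (fob F (Dob A)) = H_raw (flatA_raw A);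
  DH_hom : forall A B (u : AHom A B),
      JMeq (proj1_sig (fhom F (Dhom A B u))) (H_fun _ _ (flatA_hom u));
  EK_ob : forall x, flatA_raw (Eob x) = K_raw (fob F x);
  EK_hom : forall x y (phi : chom X x y),
      JMeq (proj1_sig (Ehom x y phi)) (K_fun _ _ (fhom F phi));
  eu_flat : forall A, JMeq (proj1_sig (eu A)) (eval_e (flatA_raw A));
  ec_flat : forall x, JMeq (proj1_sig (fhom F (ec x))) (eval_eps (fob F x)) }.

Arguments Dhom {V X F} _ {A B} _.
Arguments Ehom {V X F} _ {x y} _.

Definition P_surjective {X : Cat} (F : flat_functor X) {a b : cob X} (phi : chom X a b) : Prop :=
  surj (proj1_sig (fhom F phi)).
Definition P_embedding {X : Cat} (F : flat_functor X) {a b : cob X} (phi : chom X a b) : Prop :=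
  order_embedding (proj1_sig (fhom F phi)).

(* Both parts reduce to plain Priestley duality.  The flat of [D] is [H], so
   for (1) one works with a lattice homomorphism [u : L1 -> L2] and its dual
   [H u], restriction along [u].  Only two facts about a reduct [L] of an
   algebra [B] are used: [H L] is compact (it is the flat of [D B]), and the
   homomorphisms [L -> 2] separate points (the unit [e_B] is an isomorphism
   whose flat is evaluation).  Compactness enters through one form of the
   prime filter theorem: if every point of [H L] is either "refuted" by an
   element of a filter-like family or "confirmed" by an element of an
   ideal-like family, then a single pair (p, q) from the two families with
   [p <= q] does the job.  Part (2) follows from part (1) applied to [E phi],
   because the counit makes [phi] and [D (E phi)] isomorphic on flats. *)
From Stdlib Require Import List JMeq FunctionalExtensionality Bool Classical ProofIrrelevance.

Lemma sig_fun_ext (A B : Type) (P : (A -> B) -> Prop) (f g : sig P) :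
  (forall x, proj1_sig f x = proj1_sig g x) -> f = g.
Proof.
  destruct f as [f pf], g as [g pg]; simpl; intro E.
  apply subset_eq_compat, functional_extensionality, E.
Qed.

Section LatticeHomomorphisms.
Variables (L M : BDLraw) (f : LHom L M).

Lemma LHom_meet x y : proj1_sig f (lmeet L x y) = lmeet M (proj1_sig f x) (proj1_sig f y).
Proof. exact (proj1 (proj2_sig f) x y). Qed.

Lemma LHom_join x y : proj1_sig f (ljoin L x y) = ljoin M (proj1_sig f x) (proj1_sig f y).
Proof. exact (proj1 (proj2 (proj2_sig f)) x y). Qed.

Lemma LHom_bot : proj1_sig f (lbot L) = lbot M.
Proof. exact (proj1 (proj2 (proj2 (proj2_sig f)))). Qed.

Lemma LHom_top : proj1_sig f (ltop L) = ltop M.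
Proof. exact (proj2 (proj2 (proj2 (proj2_sig f)))). Qed.

End LatticeHomomorphisms.

Lemma H_fiber_open (L : BDLraw) (x : lcar L) (c : bool) :
  H_open L (fun k : Hcar L => proj1_sig k x = c).
Proof.
  intros h Hh. exists ((x, c) :: nil). split.
  - intros p [<-|[]]; exact Hh.
  - intros k Hk. exact (Hk (x, c) (or_introl eq_refl)).
Qed.

Definition hle (L : BDLraw) (x y : lcar L) : Prop :=
  forall h : Hcar L, proj1_sig h x = true -> proj1_sig h y = true.

Definition separating (L : BDLraw) : Prop :=
  forall x y : lcar L, (forall h : Hcar L, proj1_sig h x = proj1_sig h y) -> x = y.

Section HomOrder.
Variable L : BDLraw.

Lemma hle_refl x : hle L x x.
Proof. intros h H; exact H. Qed.

Lemma hle_trans x y z : hle L x y -> hle L y z -> hle L x z.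
Proof. intros Hxy Hyz h H; exact (Hyz h (Hxy h H)). Qed.

Lemma hle_bot x : hle L (lbot L) x.
Proof. intros h H. rewrite LHom_bot in H. discriminate. Qed.

Lemma hle_top x : hle L x (ltop L).
Proof. intros h _. apply LHom_top. Qed.

Lemma hle_meet_l x y : hle L (lmeet L x y) x.
Proof. intros h H. rewrite LHom_meet in H. exact (proj1 (andb_prop _ _ H)). Qed.

Lemma hle_meet_glb x y z : hle L z x -> hle L z y -> hle L z (lmeet L x y).
Proof. intros Hx Hy h H. rewrite LHom_meet, (Hx h H), (Hy h H). reflexivity. Qed.

Lemma hle_join_lub x y z : hle L x z -> hle L y z -> hle L (ljoin L x y) z.
Proof.
  intros Hx Hy h H. rewrite LHom_join in H.
  destruct (orb_prop _ _ H) as [E|E]; [exact (Hx h E)|exact (Hy h E)].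
Qed.

Lemma separating_hle_antisym x y : separating L -> hle L x y -> hle L y x -> x = y.
Proof.
  intros sep Hxy Hyx. apply sep. intro h.
  destruct (proj1_sig h x) eqn:Ex, (proj1_sig h y) eqn:Ey; auto.
  - rewrite (Hxy h Ex) in Ey. discriminate.
  - rewrite (Hyx h Ey) in Ex. discriminate.
Qed.

Lemma compact_filter_ideal (P Q : lcar L -> Prop) :
  compact_space (H_raw L) ->
  P (ltop L) -> (forall x y, P x -> P y -> P (lmeet L x y)) ->
  Q (lbot L) -> (forall x y, Q x -> Q y -> Q (ljoin L x y)) ->
  (forall k : Hcar L, (exists p, P p /\ proj1_sig k p = false) \/
                      (exists q, Q q /\ proj1_sig k q = true)) ->
  exists p q, P p /\ Q q /\ hle L p q.
Proof.
  intros comp Ptop Pmeet Qbot Qjoin cover.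
  set (C := fun U : Hcar L -> Prop =>
    (exists p, P p /\ U = fun k : Hcar L => proj1_sig k p = false) \/
    (exists q, Q q /\ U = fun k : Hcar L => proj1_sig k q = true)).
  destruct (comp C) as [l [Hl Hcov]].
  - intros U [[p [_ ->]]|[q [_ ->]]]; apply H_fiber_open.
  - intro k. destruct (cover k) as [[p [Pp Hp]]|[q [Qq Hq]]].
    + exists (fun k : Hcar L => proj1_sig k p = false).
      split; [left; exists p; auto|exact Hp].
    + exists (fun k : Hcar L => proj1_sig k q = true).
      split; [right; exists q; auto|exact Hq].
  - assert (finite : exists p q, P p /\ Q q /\ forall k : Hcar L,
               (exists U, In U l /\ U k) -> proj1_sig k p = false \/ proj1_sig k q = true).
    { clear Hcov. revert Hl. induction l as [|U l IH]; intro Hl.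
      - exists (ltop L), (lbot L). repeat split; auto. intros k [U [[] _]].
      - destruct IH as [p [q [Pp [Qq Hpq]]]]; [intros W HW; apply Hl; right; exact HW|].
        destruct (Hl U (or_introl eq_refl)) as [[p0 [Pp0 ->]]|[q0 [Qq0 ->]]].
        + exists (lmeet L p p0), q. repeat split; auto.
          intros k [W [[<-|HW] HkW]]; rewrite LHom_meet.
          * left. rewrite HkW. apply andb_false_r.
          * destruct (Hpq k (ex_intro _ W (conj HW HkW))) as [E|E]; rewrite ?E; auto.
        + exists p, (ljoin L q q0). repeat split; auto.
          intros k [W [[<-|HW] HkW]]; rewrite LHom_join.
          * right. rewrite HkW. apply orb_true_r.
          * destruct (Hpq k (ex_intro _ W (conj HW HkW))) as [E|E]; rewrite ?E; auto. }
    destruct finite as [p [q [Pp [Qq Hpq]]]]. exists p, q. repeat split; auto.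
    intros k Hk. destruct (Hpq k (Hcov k)) as [E|E]; congruence.
Qed.

End HomOrder.

Section DualOfLatticeHomomorphism.
Variables (L1 L2 : BDLraw) (u : LHom L1 L2).
Hypotheses (sep2 : separating L2) (comp2 : compact_space (H_raw L2)).

Lemma surj_H_order_embedding :
  surj (proj1_sig u) -> @order_embedding (H_raw L2) (H_raw L1) (H_fun L1 L2 u).
Proof.
  intros S h k; split; intros H a; simpl in *.
  - apply H.
  - destruct (S a) as [b <-]. apply H.
Qed.

Lemma H_surj_inj : separating L1 -> surj (H_fun L1 L2 u) -> inj (proj1_sig u).
Proof.
  intros sep1 S a b E. apply sep1. intro h. destruct (S h) as [k <-]. simpl.
  rewrite E. reflexivity.
Qed.

(* For [h b = true], each [k] with [k b = false] has [~ h <= k]; as [H u]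
   reflects the order, some image [u a] witnesses this.  Compactness then
   yields [u a <= b] with [h (u a) = true], and a second use makes [b] a
   finite join of such images. *)
Lemma H_order_embedding_surj :
  @order_embedding (H_raw L2) (H_raw L1) (H_fun L1 L2 u) -> surj (proj1_sig u).
Proof.
  intros OE b.
  assert (local : forall h : Hcar L2, proj1_sig h b = true ->
            exists a, proj1_sig h (proj1_sig u a) = true /\ hle L2 (proj1_sig u a) b).
  { intros h Hb.
    destruct (compact_filter_ideal L2
      (fun p => exists a, proj1_sig h (proj1_sig u a) = true /\ p = proj1_sig u a)
      (fun q => hle L2 q b) comp2) as [p [q [[a [Ha ->]] [Hqb Hpq]]]].
    - exists (ltop L1). rewrite !LHom_top. auto.
    - intros x y [a [Ha ->]] [a' [Ha' ->]]. exists (lmeet L1 a a').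
      rewrite !LHom_meet, Ha, Ha'. auto.
    - apply hle_bot.
    - intros x y; apply hle_join_lub.
    - intro k. destruct (proj1_sig k b) eqn:Kb.
      + right. exists b. split; [apply hle_refl|exact Kb].
      + left.
        assert (not_le : ~ ple (H_raw L1) (H_fun L1 L2 u h) (H_fun L1 L2 u k)).
        { intro Hle. assert (Hhk : implb (proj1_sig h b) (proj1_sig k b) = true)
            by exact (proj2 (OE h k) Hle b).
          rewrite Hb, Kb in Hhk. discriminate. }
        destruct (not_all_ex_not _ _ not_le) as [a Ha].
        assert (Hhk : implb (proj1_sig h (proj1_sig u a)) (proj1_sig k (proj1_sig u a)) <> true)
          by exact Ha.
        exists (proj1_sig u a).
        destruct (proj1_sig h (proj1_sig u a)) eqn:Eh, (proj1_sig k (proj1_sig u a));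
          try (exfalso; apply Hhk; reflexivity).
        split; [exists a|]; auto.
    - exists a. split; [exact Ha|exact (hle_trans L2 _ _ _ Hpq Hqb)]. }
  destruct (compact_filter_ideal L2 (fun p => hle L2 b p)
    (fun q => exists a, q = proj1_sig u a /\ hle L2 (proj1_sig u a) b) comp2)
    as [p [q [Hbp [[a [-> Hab]] Hpa]]]].
  - apply hle_top.
  - intros x y; apply hle_meet_glb.
  - exists (lbot L1). rewrite LHom_bot. split; [reflexivity|apply hle_bot].
  - intros x y [a [-> Ha]] [a' [-> Ha']]. exists (ljoin L1 a a').
    rewrite LHom_join. split; [reflexivity|apply hle_join_lub; assumption].
  - intro k. destruct (proj1_sig k b) eqn:Kb.
    + right. destruct (local k Kb) as [a [Ha Hab]].
      exists (proj1_sig u a). split; [exists a; auto|exact Ha].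
    + left. exists b. split; [apply hle_refl|exact Kb].
  - exists a. apply separating_hle_antisym; [exact sep2|exact Hab|].
    exact (hle_trans L2 _ _ _ Hbp Hpa).
Qed.

(* If [g : L1 -> 2] had no extension along [u], compactness would give
   [a] with [g a = true] and [a'] with [g a' = false] but [u a <= u a'];
   then [u (a /\ a') = u a], contradicting injectivity. *)
Lemma inj_H_surj : inj (proj1_sig u) -> surj (H_fun L1 L2 u).
Proof.
  intros I g.
  destruct (classic (exists h : Hcar L2,
              forall a, proj1_sig h (proj1_sig u a) = proj1_sig g a)) as [[h Hh]|N].
  { exists h. apply sig_fun_ext. exact Hh. }
  exfalso.
  destruct (compact_filter_ideal L2
    (fun p => exists a, proj1_sig g a = true /\ p = proj1_sig u a)
    (fun q => exists a, proj1_sig g a = false /\ q = proj1_sig u a) comp2)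
    as [p [q [[a [Ga ->]] [[a' [Ga' ->]] Hle]]]].
  - exists (ltop L1). rewrite !LHom_top. auto.
  - intros x y [b [Gb ->]] [b' [Gb' ->]]. exists (lmeet L1 b b').
    rewrite !LHom_meet, Gb, Gb'. auto.
  - exists (lbot L1). rewrite !LHom_bot. auto.
  - intros x y [b [Gb ->]] [b' [Gb' ->]]. exists (ljoin L1 b b').
    rewrite !LHom_join, Gb, Gb'. auto.
  - intro k.
    destruct (not_all_ex_not _ _ (fun H => N (ex_intro _ k H))) as [b Hb].
    destruct (proj1_sig g b) eqn:Gb; [left|right]; exists (proj1_sig u b);
      (split; [exists b; auto|]);
      destruct (proj1_sig k (proj1_sig u b)); congruence.
  - assert (Emeet : lmeet L1 a a' = a).
    { apply I. rewrite LHom_meet. apply separating_hle_antisym; [exact sep2| |].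
      - apply hle_meet_l.
      - apply hle_meet_glb; [apply hle_refl|exact Hle]. }
    assert (Eg := LHom_meet _ _ g a a'). rewrite Emeet, Ga, Ga' in Eg. discriminate.
Qed.

End DualOfLatticeHomomorphism.

Lemma JMeq_inj (T U U' : Type) (f : T -> U) (g : T -> U') :
  U = U' -> JMeq f g -> inj f -> inj g.
Proof. intros -> H. apply JMeq_eq in H. subst. auto. Qed.

Lemma JMeq_surj_order_embedding (P Q P' Q' : PSpace) (f : P -> Q) (g : P' -> Q') :
  P = P' -> Q = Q' -> JMeq f g ->
  (surj f <-> surj g) /\ (order_embedding f <-> order_embedding g).
Proof. intros -> -> H. apply JMeq_eq in H. subst. tauto. Qed.

Definition porder_iso (P Q : PSpace) (e : P -> Q) (g : Q -> P) : Prop :=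
  pmonotone P Q e /\ pmonotone Q P g /\ (forall x, g (e x) = x) /\ (forall y, e (g y) = y).

Lemma porder_iso_sym (P Q : PSpace) (e : P -> Q) (g : Q -> P) :
  porder_iso P Q e g -> porder_iso Q P g e.
Proof. unfold porder_iso; tauto. Qed.

Section OrderIsoSquare.
Variables (P1 Q1 P2 Q2 : PSpace) (f : P1 -> Q1) (p : P2 -> Q2).
Variables (e1 : P1 -> P2) (g1 : P2 -> P1) (e2 : Q1 -> Q2) (g2 : Q2 -> Q1).
Hypotheses (iso1 : porder_iso P1 P2 e1 g1) (iso2 : porder_iso Q1 Q2 e2 g2).
Hypothesis square : forall x, p (e1 x) = e2 (f x).

Lemma order_iso_square_inv : forall y, f (g1 y) = g2 (p y).
Proof.
  destruct iso1 as [_ [_ [_ eg1]]], iso2 as [_ [_ [ge2 _]]].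
  intro y. rewrite <- (eg1 y) at 2. rewrite square. symmetry. apply ge2.
Qed.

Lemma order_iso_square_transfer :
  (surj f -> surj p) /\ (order_embedding f -> order_embedding p).
Proof.
  destruct iso1 as [m1 [n1 [_ eg1]]], iso2 as [m2 [n2 [ge2 eg2]]]. split.
  - intros S y. destruct (S (g2 y)) as [x Hx]. exists (e1 x). rewrite square, Hx. apply eg2.
  - intros O x y. split; intro H; rewrite <- (eg1 x), <- (eg1 y).
    + rewrite !square. apply m2, O, n1, H.
    + apply m1, O.
      rewrite <- (ge2 (f (g1 x))), <- (ge2 (f (g1 y))), <- !square, !eg1. apply n2, H.
Qed.

End OrderIsoSquare.

Lemma order_iso_square_iff (P1 Q1 P2 Q2 : PSpace) (f : P1 -> Q1) (p : P2 -> Q2)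
  (e1 : P1 -> P2) (g1 : P2 -> P1) (e2 : Q1 -> Q2) (g2 : Q2 -> Q1) :
  porder_iso P1 P2 e1 g1 -> porder_iso Q1 Q2 e2 g2 -> (forall x, p (e1 x) = e2 (f x)) ->
  (surj f <-> surj p) /\ (order_embedding f <-> order_embedding p).
Proof.
  intros iso1 iso2 square.
  pose proof (order_iso_square_inv _ _ _ _ f p e1 g1 e2 g2 iso1 iso2 square) as square'.
  destruct (order_iso_square_transfer _ _ _ _ f p e1 g1 e2 g2 iso1 iso2 square) as [S O].
  destruct (order_iso_square_transfer _ _ _ _ p f g1 e1 g2 e2
              (porder_iso_sym _ _ _ _ iso1) (porder_iso_sym _ _ _ _ iso2) square') as [S' O'].
  tauto.
Qed.

Section RestrictedPriestleyDuality.
Variables (V : variety) (X : Cat) (F : flat_functor X) (R : rpd V X F).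

Lemma reduct_separating (A : AObj V) : separating (flatA_raw A).
Proof.
  intros a b Hab.
  destruct (eu_iso V X F R A) as [g [ge _]].
  assert (inj_e : inj (proj1_sig (eu V X F R A))).
  { intros x y E. rewrite <- (ge x), <- (ge y), E. reflexivity. }
  assert (EK : acar (proj1_sig (Eob V X F R (Dob V X F R A))) = Kcar (H_raw (flatA_raw A))).
  { change (lcar (flatA_raw (Eob V X F R (Dob V X F R A))) = Kcar (H_raw (flatA_raw A))).
    rewrite (EK_ob V X F R), <- (DH_ob V X F R). reflexivity. }
  apply (JMeq_inj _ _ _ _ _ EK (eu_flat V X F R A) inj_e), sig_fun_ext, Hab.
Qed.

Lemma H_reduct_compact (A : AObj V) : compact_space (H_raw (flatA_raw A)).
Proof.
  pose proof (proj2_sig (fob F (Dob V X F R A))) as P.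
  rewrite (DH_ob V X F R A) in P. exact (proj1 (proj2 P)).
Qed.

Lemma Dhom_surj_inj (A B : AObj V) (u : AHom A B) :
  (surj (proj1_sig u) <-> P_embedding F (Dhom R u)) /\
  (inj (proj1_sig u) <-> P_surjective F (Dhom R u)).
Proof.
  destruct (JMeq_surj_order_embedding _ _ _ _ _ _
              (DH_ob V X F R B) (DH_ob V X F R A) (DH_hom V X F R A B u)) as [S O].
  unfold P_embedding, P_surjective. rewrite S, O.
  pose proof (reduct_separating B) as sep. pose proof (H_reduct_compact B) as comp.
  split; split.
  - exact (surj_H_order_embedding _ _ (flatA_hom u)).
  - exact (H_order_embedding_surj _ _ (flatA_hom u) sep comp).
  - exact (inj_H_surj _ _ (flatA_hom u) sep comp).
  - exact (H_surj_inj _ _ (flatA_hom u) (reduct_separating A)).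
Qed.

Lemma counit_flat_order_iso (x : cob X) : exists g : chom X (Dob V X F R (Eob V X F R x)) x,
  porder_iso _ _ (proj1_sig (fhom F (ec V X F R x))) (proj1_sig (fhom F g)).
Proof.
  destruct (ec_iso V X F R x) as [g [gec ecg]]. exists g.
  repeat split; try apply (proj2 (proj2_sig (fhom F _))); intro p;
    rewrite <- fhom_comp; [rewrite gec|rewrite ecg]; apply fhom_id.
Qed.

Lemma DEhom_flat (x y : cob X) (phi : chom X x y) :
  (P_surjective F phi <-> P_surjective F (Dhom R (Ehom R phi))) /\
  (P_embedding F phi <-> P_embedding F (Dhom R (Ehom R phi))).
Proof.
  destruct (counit_flat_order_iso x) as [gx isox], (counit_flat_order_iso y) as [gy isoy].
  apply (order_iso_square_iff _ _ _ _ _ _ _ _ _ _ isox isoy).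
  intro p. rewrite <- !fhom_comp, ec_nat. reflexivity.
Qed.

End RestrictedPriestleyDuality.

Theorem lemma2p7 (V : variety) (X : Cat) (F : flat_functor X) (R : rpd V X F) :
  (forall (A B : AObj V) (u : AHom A B),
      (surj (proj1_sig u) <-> P_embedding F (Dhom R u)) /\
      (inj (proj1_sig u) <-> P_surjective F (Dhom R u))) /\
  (forall (x y : cob X) (phi : chom X x y),
      (P_surjective F phi <-> inj (proj1_sig (Ehom R phi))) /\
      (P_embedding F phi <-> surj (proj1_sig (Ehom R phi)))).
Proof.
  split.
  - apply Dhom_surj_inj.
  - intros x y phi.
    destruct (DEhom_flat V X F R x y phi) as [S E].
    destruct (Dhom_surj_inj V X F R _ _ (Ehom R phi)) as [S' E'].
    rewrite S, E, S', E'. tauto.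
Qed.
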